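(* Let $I$ be a set of players with $|I|\ge2$ and $S$ a set of states of nature with $|S|\ge2$. Then there is no universal $\infty$-type space on $S$ for player set $I$, and there is no universal $*$-type space on $S$ for player set $I$.
   Context: An $\infty$-field on a nonempty set $M$ is a field of subsets closed under arbitrary intersections. For an $\infty$-field $\Sigma$ on $M$, $\Delta^\infty(M,\Sigma)$ is the set of finitely additive probability measures on $(M,\Sigma)$, endowed with the $\infty$-field generated by the sets $\{\mu:\mu(E)\ge p\}$, $E\in\Sigma$, $p\in[0,1]$. An $\infty$-type space on $S$ for $I$ is $\langle M,\Sigma,(T_i)_{i\in I},\theta\rangle$ with $M$ nonempty, $\Sigma$ an $\infty$-field on $M$, each $T_i:M\to\Delta^\infty(M,\Sigma)$ measurable such that for all $m\in M$, $A\in\Sigma$: $\{m':T_i(m')=T_i(m)\}\subseteq A$ implies $T_i(m)(A)=1$; and $\theta:M\to S$ $\Sigma$–$\mathrm{Pow}(S)$-measurable. A $*$-type space on $S$ for $I$ is $\langle M,(T_i)_{i\in I},\theta\rangle$ with $M$ nonempty, each $T_i$ a function from $M$ to finitely additive probability measures on $(M,\mathrm{Pow}(M))$ with $T_i(m)(\{m':T_i(m')=T_i(m)\})=1$, and $\theta:M\to S$ any function. A type morphism from $\langle M',\Sigma',(T'_i),\theta'\rangle$ to $\langle M,\Sigma,(T_i),\theta\rangle$ (for $*$-type spaces take $\Sigma=\mathrm{Pow}(M)$) is a $\Sigma'$–$\Sigma$-measurable $f:M'\to M$ with $\theta'(m')=\theta(f(m'))$ and $T_i(f(m'))(E)=T'_i(m')(f^{-1}(E))$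 for all $m'$, $E\in\Sigma$, $i\in I$. An $\infty$-type space (resp. $*$-type space) is universal if every $\infty$-type space (resp. $*$-type space) on $S$ for $I$ admits a unique type morphism into it. *)

From Stdlib Require Import Reals.
Open Scope R_scope.

Definition inf_field {M : Type} (Sig : (M -> Prop) -> Prop) : Prop :=
  Sig (fun _ => True) /\
  (forall A, Sig A -> Sig (fun x => ~ A x)) /\
  (forall A B, Sig A -> Sig B -> Sig (fun x => A x \/ B x)) /\
  (forall F : (M -> Prop) -> Prop, (forall A, F A -> Sig A) ->
     Sig (fun x => forall A, F A -> A x)).

(* A measure is encoded
   as a function on all subsets, normalised to be 0 outside Sig, so that such
   functions correspond bijectively to finitely additive probability measures
   on the field Sig. *)
Definition fa_prob {M : Type} (Sig : (M -> Prop) -> Prop)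
    (mu : (M -> Prop) -> R) : Prop :=
  (forall E, Sig E -> 0 <= mu E) /\
  mu (fun _ => True) = 1 /\
  (forall A B, Sig A -> Sig B -> (forall x, ~ (A x /\ B x)) ->
     mu (fun x => A x \/ B x) = mu A + mu B) /\
  (forall E, ~ Sig E -> mu E = 0).

Definition Delta_inf (M : Type) (Sig : (M -> Prop) -> Prop) : Type :=
  { mu : (M -> Prop) -> R | fa_prob Sig mu }.

Definition gen_inf_field {X : Type} (G : (X -> Prop) -> Prop) (A : X -> Prop)
  : Prop :=
  forall F : (X -> Prop) -> Prop, inf_field F -> (forall B, G B -> F B) -> F A.

Definition Delta_field (M : Type) (Sig : (M -> Prop) -> Prop) :
    (Delta_inf M Sig -> Prop) -> Prop :=
  gen_inf_field (fun B => exists (E : M -> Prop) (p : R),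
    Sig E /\ 0 <= p <= 1 /\ B = (fun mu => proj1_sig mu E >= p)).

Definition measurable_map {X Y : Type} (SX : (X -> Prop) -> Prop)
    (SY : (Y -> Prop) -> Prop) (f : X -> Y) : Prop :=
  forall B, SY B -> SX (fun x => B (f x)).

Definition inf_type_space (I S M : Type) (Sig : (M -> Prop) -> Prop)
    (T : I -> M -> Delta_inf M Sig) (theta : M -> S) : Prop :=
  inhabited M /\ inf_field Sig /\
  (forall i, measurable_map Sig (Delta_field M Sig) (T i)) /\
  (forall i m A, Sig A -> (forall m', T i m' = T i m -> A m') ->
     proj1_sig (T i m) A = 1) /\
  measurable_map Sig (fun _ : S -> Prop => True) theta.

Definition inf_type_morphism (I S M' M : Type)
    (Sig' : (M' -> Prop) -> Prop) (T' : I -> M' -> Delta_inf M' Sig') (theta' : M' -> S)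
    (Sig : (M -> Prop) -> Prop) (T : I -> M -> Delta_inf M Sig) (theta : M -> S)
    (f : M' -> M) : Prop :=
  measurable_map Sig' Sig f /\
  (forall m', theta' m' = theta (f m')) /\
  (forall i m' E, Sig E ->
     proj1_sig (T i (f m')) E = proj1_sig (T' i m') (fun x => E (f x))).

Definition inf_universal (I S M : Type) (Sig : (M -> Prop) -> Prop)
    (T : I -> M -> Delta_inf M Sig) (theta : M -> S) : Prop :=
  inf_type_space I S M Sig T theta /\
  forall (M' : Type) (Sig' : (M' -> Prop) -> Prop)
         (T' : I -> M' -> Delta_inf M' Sig') (theta' : M' -> S),
    inf_type_space I S M' Sig' T' theta' ->
    exists! f : M' -> M, inf_type_morphism I S M' M Sig' T' theta' Sig T theta f.

Definition pow_set {M : Type} : (M -> Prop) -> Prop := fun _ => True.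

Definition star_type_space (I S M : Type)
    (T : I -> M -> (M -> Prop) -> R) (theta : M -> S) : Prop :=
  inhabited M /\
  (forall i m, fa_prob (@pow_set M) (T i m)) /\
  (forall i m, T i m (fun m' => T i m' = T i m) = 1).

Definition star_type_morphism (I S M' M : Type)
    (T' : I -> M' -> (M' -> Prop) -> R) (theta' : M' -> S)
    (T : I -> M -> (M -> Prop) -> R) (theta : M -> S) (f : M' -> M) : Prop :=
  (forall m', theta' m' = theta (f m')) /\
  (forall i m' (E : M -> Prop), T i (f m') E = T' i m' (fun x => E (f x))).

Definition star_universal (I S M : Type)
    (T : I -> M -> (M -> Prop) -> R) (theta : M -> S) : Prop :=
  star_type_space I S M T theta /\
  forall (M' : Type) (T' : I -> M' -> (M' -> Prop) -> R) (theta' : M' -> S),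
    star_type_space I S M' T' theta' ->
    exists! f : M' -> M, star_type_morphism I S M' M T' theta' T theta f.

From Stdlib Require Import Reals List Lra Lia.
From Stdlib Require Import ClassicalEpsilon FunctionalExtensionality
  PropExtensionality ProofIrrelevance IndefiniteDescription.
From mathcomp Require filter.
Open Scope R_scope.

(* Fix players i <> j and states s <> t, and suppose M is universal.  Extend M by
   points [Diag A l], for every set A of j-types and every finite list l of points of M,
   and slots [Slot l o].  At [Diag A l] player i is uniformly uncertain among the slots
   of l: [Slot l (Some b)], a copy of b for every player but i, in state s, and
   [Slot l None], in state t.  Player j at [Diag A l] believes in an ultrafilter on the
   index l containing "some point of l has j-type q" exactly when q is in A.  Through the
   morphism u into M, player i at u (Diag A l) gives positive probability to "j has type
   q and the state is s" iff q is the j-type of a point of l, so player j at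
   u (Diag A []) is sure of this event iff q is in A.  Hence A |-> T_j (u (Diag A []))
   injects the sets of j-types into the j-types, contradicting Cantor.  Uniqueness of
   morphisms into M forces u to be the identity on M; and the extension is again an
   infinity-type space because in an infinity-type space every union of k-types is
   measurable, the infinity-field on beliefs being the full power set. *)

Lemma pred_ext {X : Type} (A B : X -> Prop) : (forall x, A x <-> B x) -> A = B.
Proof.
  intro H. apply functional_extensionality. intro x.
  apply propositional_extensionality, H.
Qed.

Section InfField.
Variables (X : Type) (Sig : (X -> Prop) -> Prop).
Hypothesis HSig : inf_field Sig.

Lemma inf_field_compl A : Sig A -> Sig (fun x => ~ A x).
Proof. apply HSig. Qed.

Lemma inf_field_and A B : Sig A -> Sig B -> Sig (fun x => A x /\ B x).
Proof.
  destruct HSig as [_ [Hc [Hu _]]]. intros HA HB.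
  replace (fun x => A x /\ B x) with (fun x => ~ (~ A x \/ ~ B x)).
  - apply Hc, Hu; apply Hc; assumption.
  - apply pred_ext. intro x. tauto.
Qed.

Lemma inf_field_full_of_singletons :
  (forall x, Sig (fun y => y = x)) -> forall A, Sig A.
Proof.
  destruct HSig as [_ [Hc [_ Hcap]]]. intros Hsing A.
  replace A with (fun x => forall C, (exists y, ~ A y /\ C = (fun z => z <> y)) -> C x).
  - apply Hcap. intros C [y [_ ->]]. apply Hc, Hsing.
  - apply pred_ext. intro x. split.
    + intro H. apply NNPP. intro nAx. exact (H _ (ex_intro _ x (conj nAx eq_refl)) eq_refl).
    + intros Ax C [y [nAy ->]] ->. contradiction.
Qed.

Lemma fa_prob_mono mu P A : fa_prob Sig mu -> Sig P -> Sig A ->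
  (forall x, P x -> A x) -> mu P <= mu A.
Proof.
  intros [Hpos [_ [Hadd _]]] HP HA HPA.
  assert (HD : Sig (fun x => A x /\ ~ P x)) by (apply inf_field_and, inf_field_compl; assumption).
  replace A with (fun x => P x \/ (A x /\ ~ P x)).
  - rewrite Hadd by (try assumption; intros x [Px [_ nPx]]; contradiction).
    pose proof (Hpos _ HD). lra.
  - apply pred_ext. intro x. split; [intros [Px|[Ax _]]; auto|].
    intro Ax. destruct (classic (P x)); auto.
Qed.

Lemma fa_prob_le1 mu E : fa_prob Sig mu -> Sig E -> 0 <= mu E <= 1.
Proof.
  intros Hmu HE. split; [apply Hmu, HE|].
  rewrite <- (proj1 (proj2 Hmu)).
  apply fa_prob_mono; [exact Hmu | exact HE | apply HSig | trivial].
Qed.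

End InfField.

Lemma pow_set_inf_field {X : Type} : inf_field (@pow_set X).
Proof. repeat split. Qed.

Lemma fa_prob_ext {X : Type} (Sig : (X -> Prop) -> Prop) mu nu :
  fa_prob Sig mu -> fa_prob Sig nu -> (forall E, Sig E -> mu E = nu E) -> mu = nu.
Proof.
  intros [_ [_ [_ Hmu]]] [_ [_ [_ Hnu]]] H. apply functional_extensionality. intro E.
  destruct (classic (Sig E)) as [HE|HE]; [apply H, HE|rewrite Hmu, Hnu; trivial].
Qed.

(* {nu} is cut out by the generators {mu | mu E >= nu E} and the complements of the
   generators {mu | mu E >= p} with p > nu E. *)
Lemma Delta_field_singleton (M : Type) (Sig : (M -> Prop) -> Prop) (nu : Delta_inf M Sig) :
  inf_field Sig -> Delta_field M Sig (fun mu => mu = nu).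
Proof.
  intros HSig F [_ [Hc [_ Hcap]]] Hgen.
  pose (Fam := fun C : Delta_inf M Sig -> Prop => exists E, Sig E /\
    (C = (fun mu => proj1_sig mu E >= proj1_sig nu E) \/
     exists p, proj1_sig nu E < p <= 1 /\ C = (fun mu => ~ proj1_sig mu E >= p))).
  replace (fun mu => mu = nu) with (fun mu => forall C, Fam C -> C mu).
  - apply Hcap. intros C [E [HE [->|[p [Hp ->]]]]].
    + apply Hgen. exists E, (proj1_sig nu E). split; [exact HE|].
      split; [exact (fa_prob_le1 _ _ HSig _ _ (proj2_sig nu) HE) | reflexivity].
    + apply Hc, Hgen. exists E, p. split; [exact HE|]. split; [|reflexivity].
      split; [|lra]. apply Rle_trans with (proj1_sig nu E); [apply (proj2_sig nu), HE | lra].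
  - apply pred_ext. intro mu. split.
    + intro Hmu. destruct mu as [mu Pmu], nu as [nu Pnu]. apply subset_eq_compat.
      apply (fa_prob_ext Sig); [exact Pmu | exact Pnu |]. intros E HE.
      assert (Hge : mu E >= nu E)
        by (apply (Hmu (fun mu => proj1_sig mu E >= nu E)); exists E; auto).
      destruct (Rle_lt_dec (mu E) (nu E)) as [Hle|Hlt]; [lra|].
      exfalso. apply (Hmu (fun mu' => ~ proj1_sig mu' E >= mu E)); [|simpl; lra].
      exists E. split; [exact HE|]. right. exists (mu E). split; [|reflexivity].
      split; [exact Hlt | apply (fa_prob_le1 _ _ HSig _ _ Pmu HE)].
    + intros -> C [E [_ [->|[p [Hp ->]]]]]; simpl; lra.
Qed.

Lemma Delta_field_full (M : Type) (Sig : (M -> Prop) -> Prop) :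
  inf_field Sig -> forall B, Delta_field M Sig B.
Proof.
  intros HSig B F HF Hgen. apply (inf_field_full_of_singletons _ _ HF).
  intro nu. exact (Delta_field_singleton M Sig nu HSig F HF Hgen).
Qed.

Record type_structure (I S M : Type) (Sig : (M -> Prop) -> Prop)
    (T : I -> M -> (M -> Prop) -> R) (theta : M -> S) : Prop := {
  ts_field : inf_field Sig;
  ts_prob : forall k m, fa_prob Sig (T k m);
  ts_introspection : forall k m A, Sig A ->
    (forall m', T k m' = T k m -> A m') -> T k m A = 1;
  ts_saturated : forall k E, (forall m m', T k m = T k m' -> E m -> E m') -> Sig E;
  ts_theta : forall B : S -> Prop, Sig (fun m => B (theta m))
}.

Lemma inf_type_space_structure I S M Sig (T : I -> M -> Delta_inf M Sig) (theta : M -> S) :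
  inf_type_space I S M Sig T theta ->
  type_structure I S M Sig (fun k m => proj1_sig (T k m)) theta.
Proof.
  intros [_ [HSig [Hmeas [Hintro Htheta]]]]. split.
  - exact HSig.
  - intros k m. exact (proj2_sig (T k m)).
  - intros k m A HA H. apply Hintro; [exact HA|]. intros m' e. apply H. rewrite e. reflexivity.
  - intros k E Hsat.
    replace E with (fun m => (fun nu => exists m', T k m' = nu /\ E m') (T k m)).
    + apply (Hmeas k (fun nu => exists m', T k m' = nu /\ E m')), Delta_field_full, HSig.
    + apply pred_ext. intro m. split; [|intro Em; exists m; auto].
      intros [m' [e Em']]. apply (Hsat m' m); [rewrite e; reflexivity | exact Em'].
  - intro B. apply Htheta. exact Logic.I.
Qed.

Lemma star_type_space_structure I S M (T : I -> M -> (M -> Prop) -> R) (theta : M -> S) :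
  star_type_space I S M T theta -> type_structure I S M pow_set T theta.
Proof.
  intros [_ [Hprob Hintro]]. split; try (intros; exact Logic.I).
  - exact pow_set_inf_field.
  - exact Hprob.
  - intros k m A _ H. apply Rle_antisym.
    + apply (fa_prob_le1 _ _ pow_set_inf_field); [apply Hprob | exact Logic.I].
    + rewrite <- (Hintro k m) at 1.
      apply (fa_prob_mono _ _ pow_set_inf_field);
        [apply Hprob | exact Logic.I | exact Logic.I | exact H].
Qed.

Arguments ts_field {I S M Sig T theta}.
Arguments ts_prob {I S M Sig T theta}.
Arguments ts_introspection {I S M Sig T theta}.
Arguments ts_saturated {I S M Sig T theta}.
Arguments ts_theta {I S M Sig T theta}.

Definition fa_prob_on {X : Type} (Sig : (X -> Prop) -> Prop) (mu : (X -> Prop) -> R) : Prop :=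
  (forall E, Sig E -> 0 <= mu E) /\
  mu (fun _ => True) = 1 /\
  (forall A B, Sig A -> Sig B -> (forall x, ~ (A x /\ B x)) ->
     mu (fun x => A x \/ B x) = mu A + mu B).

Definition restrict {X : Type} (Sig : (X -> Prop) -> Prop) (mu : (X -> Prop) -> R) :
  (X -> Prop) -> R :=
  fun E => if excluded_middle_informative (Sig E) then mu E else 0.

Definition push {X Y : Type} (g : X -> Y) (mu : (X -> Prop) -> R) : (Y -> Prop) -> R :=
  fun E => mu (fun x => E (g x)).

Lemma restrict_in {X : Type} (Sig : (X -> Prop) -> Prop) mu E : Sig E -> restrict Sig mu E = mu E.
Proof. unfold restrict. destruct (excluded_middle_informative (Sig E)); tauto. Qed.

Lemma fa_prob_restrict {X : Type} (Sig : (X -> Prop) -> Prop) mu :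
  inf_field Sig -> fa_prob_on Sig mu -> fa_prob Sig (restrict Sig mu).
Proof.
  intros [HT [_ [Hu _]]] [Hpos [Htot Hadd]].
  split; [|split; [|split]].
  - intros E HE. rewrite restrict_in; auto.
  - rewrite restrict_in; auto.
  - intros A B HA HB HAB. rewrite !restrict_in; auto.
  - intros E HE. unfold restrict. destruct (excluded_middle_informative (Sig E)); tauto.
Qed.

Lemma fa_prob_on_of_fa_prob {X : Type} (Sig : (X -> Prop) -> Prop) mu :
  fa_prob Sig mu -> fa_prob_on Sig mu.
Proof. intros [H1 [H2 [H3 _]]]. repeat split; assumption. Qed.

Lemma fa_prob_on_sub {X : Type} (Sig Sig' : (X -> Prop) -> Prop) mu :
  (forall E, Sig' E -> Sig E) -> fa_prob_on Sig mu -> fa_prob_on Sig' mu.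
Proof. intros H [H1 [H2 H3]]. split; [|split]; auto. Qed.

Lemma fa_prob_on_push {X Y : Type} (Sig : (X -> Prop) -> Prop) (g : X -> Y) mu :
  fa_prob_on Sig mu -> fa_prob_on (fun E => Sig (fun x => E (g x))) (push g mu).
Proof.
  intros [H1 [H2 H3]]. split; [|split].
  - intros E HE. apply H1, HE.
  - exact H2.
  - intros A B HA HB HAB. apply H3; auto.
Qed.

Section UniformOnList.
Context {X : Type}.

Definition count_sat (E : X -> Prop) (xs : list X) : nat :=
  length (filter (fun x => if excluded_middle_informative (E x) then true else false) xs).

Definition list_unif (xs : list X) (E : X -> Prop) : R :=
  INR (count_sat E xs) / INR (length xs).

Lemma count_sat_all (E : X -> Prop) xs :
  (forall x, In x xs -> E x) -> count_sat E xs = length xs.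
Proof.
  unfold count_sat. induction xs as [|x xs IH]; intro H; simpl; [reflexivity|].
  destruct (excluded_middle_informative (E x)) as [_|nEx].
  - simpl. rewrite IH; [reflexivity|]. intros y Hy. apply H. right. exact Hy.
  - exfalso. apply nEx, H. left. reflexivity.
Qed.

Lemma count_sat_or (A B : X -> Prop) xs : (forall x, ~ (A x /\ B x)) ->
  count_sat (fun x => A x \/ B x) xs = (count_sat A xs + count_sat B xs)%nat.
Proof.
  unfold count_sat. intro HAB. induction xs as [|x xs IH]; simpl; [reflexivity|].
  destruct (excluded_middle_informative (A x \/ B x)),
    (excluded_middle_informative (A x)), (excluded_middle_informative (B x));
    simpl; rewrite ?IH; try lia; exfalso; firstorder.
Qed.

Lemma count_sat_pos (E : X -> Prop) xs :
  (0 < count_sat E xs)%nat <-> exists x, In x xs /\ E x.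
Proof.
  unfold count_sat. induction xs as [|x xs IH]; simpl.
  - split; [intro H; inversion H | intros [y [[] _]]].
  - destruct (excluded_middle_informative (E x)) as [Ex|nEx]; simpl.
    + split; [intros _; exists x; auto | intros _; lia].
    + rewrite IH. split; intros [y [Hy Ey]]; [exists y; auto|].
      destruct Hy as [<-|Hy]; [contradiction | exists y; auto].
Qed.

Variable xs : list X.
Hypothesis Hxs : xs <> nil.

Lemma INR_length_pos : 0 < INR (length xs).
Proof. apply lt_0_INR. destruct xs; [congruence | simpl; lia]. Qed.

Lemma list_unif_fa_prob : fa_prob_on pow_set (list_unif xs).
Proof.
  pose proof INR_length_pos as Hlen. unfold list_unif. split; [|split].
  - intros E _. apply Rmult_le_pos; [apply pos_INR | left; apply Rinv_0_lt_compat, Hlen].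
  - rewrite count_sat_all by trivial. field. lra.
  - intros A B _ _ HAB. rewrite count_sat_or, plus_INR by exact HAB. field. lra.
Qed.

Lemma list_unif_all (E : X -> Prop) : (forall x, In x xs -> E x) -> list_unif xs E = 1.
Proof.
  pose proof INR_length_pos as Hlen. intro H. unfold list_unif. rewrite count_sat_all by exact H.
  field. lra.
Qed.

Lemma list_unif_pos (E : X -> Prop) : 0 < list_unif xs E <-> exists x, In x xs /\ E x.
Proof.
  pose proof INR_length_pos as Hlen. rewrite <- count_sat_pos. unfold list_unif. split; intro H0.
  - destruct (count_sat E xs); [|lia]. simpl in H0. lra.
  - apply lt_INR in H0. simpl in H0. apply Rdiv_lt_0_compat; assumption.
Qed.

End UniformOnList.

Record ultra {Y : Type} (U : (Y -> Prop) -> Prop) : Prop := {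
  ultra_full : U (fun _ => True);
  ultra_meet : forall X Z, U X -> U Z -> exists y, X y /\ Z y;
  ultra_mono : forall X Z, U X -> (forall y, X y -> Z y) -> U Z;
  ultra_prime : forall X Z, U (fun y => X y \/ Z y) -> U X \/ U Z
}.

Arguments ultra_full {Y U}.
Arguments ultra_meet {Y U}.
Arguments ultra_mono {Y U}.
Arguments ultra_prime {Y U}.

Lemma ultra_principal {Y : Type} (y : Y) : ultra (fun E => E y).
Proof.
  split; auto. intros X Z HX HZ. exists y. auto.
Qed.

Lemma ultra_above {Y : Type} (F : (Y -> Prop) -> Prop) :
  F (fun _ => True) ->
  (forall X Z, F X -> F Z -> F (fun y => X y /\ Z y)) ->
  (forall X Z, F X -> (forall y, X y -> Z y) -> F Z) ->
  (forall X, F X -> exists y, X y) ->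
  exists U, ultra U /\ forall X, F X -> U X.
Proof.
  intros HT HI HS Hex.
  assert (HF : filter.ProperFilter F).
  { apply filter.Build_ProperFilter_ex; [exact Hex|]. constructor.
    - exact HT.
    - exact HI.
    - intros X Z HXZ HX. exact (HS X Z HX HXZ). }
  destruct (filter.ultraFilterLemma HF) as [U [HU HFU]].
  pose proof (@filter.ultra_proper _ _ HU) as PU.
  pose proof (@filter.filter_filter _ _ PU) as FU.
  exists U. split; [|exact HFU]. split.
  - exact (@filter.filterT _ _ FU).
  - intros X Z HX HZ. exact (@filter.filter_ex _ _ PU _ (@filter.filterI _ _ FU X Z HX HZ)).
  - intros X Z HX HXZ. exact (@filter.filterS _ _ FU X Z HXZ HX).
  - intros X Z HXZ.
    destruct (filter.in_ultra_setVsetC X HU) as [|nX]; [left; assumption|].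
    destruct (filter.in_ultra_setVsetC Z HU) as [|nZ]; [right; assumption|].
    exfalso.
    pose proof (@filter.filterI _ _ FU _ _ (@filter.filterI _ _ FU _ _ nX nZ) HXZ) as H.
    destruct (@filter.filter_ex _ _ PU _ H) as [y [[nXy nZy] [Xy|Zy]]]; contradiction.
Qed.

Definition ultra_measure {Y : Type} (U : (Y -> Prop) -> Prop) : (Y -> Prop) -> R :=
  fun E => if excluded_middle_informative (U E) then 1 else 0.

Lemma ultra_measure_one {Y : Type} (U : (Y -> Prop) -> Prop) E : ultra_measure U E = 1 <-> U E.
Proof.
  unfold ultra_measure. destruct (excluded_middle_informative (U E)) as [HE|nE].
  - split; [intros _; exact HE | reflexivity].
  - split; [intro H; lra | contradiction].
Qed.

Lemma ultra_measure_fa_prob {Y : Type} (U : (Y -> Prop) -> Prop) :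
  ultra U -> fa_prob_on pow_set (ultra_measure U).
Proof.
  intros HU. unfold ultra_measure. split; [|split].
  - intros E _. destruct (excluded_middle_informative (U E)); lra.
  - destruct (excluded_middle_informative _) as [|nT]; [reflexivity|].
    exfalso. apply nT, (ultra_full HU).
  - intros A B _ _ HAB.
    destruct (excluded_middle_informative (U (fun x => A x \/ B x))) as [HAB'|nAB],
      (excluded_middle_informative (U A)) as [HA|nA],
      (excluded_middle_informative (U B)) as [HB|nB]; try lra; exfalso;
      first
        [ destruct (ultra_meet HU _ _ HA HB) as [y Hy]; exact (HAB y Hy)
        | destruct (ultra_prime HU _ _ HAB'); contradiction
        | apply nAB; apply (ultra_mono HU _ _ HA); auto
        | apply nAB; apply (ultra_mono HU _ _ HB); auto ].
Qed.

(* The ultrafilter refines the filter generated, among the lists all of whose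
   [tau]-values lie in [A], by the sets of supersets of one such list. *)
Lemma ultra_list_separating {X Q : Type} (tau : X -> Q) (A : Q -> Prop) :
  exists U : (list X -> Prop) -> Prop, ultra U /\
    forall x, U (fun l => In (tau x) (map tau l)) <-> A (tau x).
Proof.
  pose (good := fun l : list X => forall b, In b l -> A (tau b)).
  pose (F := fun P : list X -> Prop =>
    exists l0, good l0 /\ forall l, good l -> incl l0 l -> P l).
  destruct (ultra_above F) as [U [HU HFU]].
  - exists nil. split; [intros b []|]. intros; exact I.
  - intros P P' [l0 [g0 H0]] [l1 [g1 H1]]. exists (l0 ++ l1). split.
    + intros b Hb. apply in_app_or in Hb. destruct Hb; auto.
    + intros l gl Hl. apply incl_app_inv in Hl. destruct Hl. split; auto.
  - intros P P' [l0 [g0 H0]] HPP'. exists l0. split; auto.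
  - intros P [l0 [g0 H0]]. exists l0. apply H0; [exact g0 | apply incl_refl].
  - exists U. split; [exact HU|]. intro x. split.
    + intro Hx. apply NNPP. intro nAx.
      assert (Hout : U (fun l => ~ In (tau x) (map tau l))).
      { apply HFU. exists nil. split; [intros b []|]. intros l gl _ Hin.
        apply in_map_iff in Hin. destruct Hin as [b [e Hb]].
        apply nAx. rewrite <- e. exact (gl b Hb). }
      destruct (ultra_meet HU _ _ Hx Hout) as [l [Hin Hnin]]. contradiction.
    + intro Ax. apply HFU. exists (x :: nil). split.
      * intros b [<-|[]]. exact Ax.
      * intros l _ Hl. apply in_map, Hl. left. reflexivity.
Qed.

Lemma cantor_on_image {X Q : Type} (tau : X -> Q) (G : (Q -> Prop) -> X) :
  ~ (forall A B, tau (G A) = tau (G B) -> forall x, A (tau x) -> B (tau x)).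
Proof.
  intro HG.
  pose (D := fun q => exists A, tau (G A) = q /\ ~ A q).
  destruct (classic (D (tau (G D)))) as [[A [e nA]]|nD].
  - apply nA. exact (HG D A (eq_sym e) (G D) (ex_intro _ A (conj e nA))).
  - apply nD. exists D. split; [reflexivity | exact nD].
Qed.

Section Construction.
Context {I S M : Type} {Sig : (M -> Prop) -> Prop} {T : I -> M -> (M -> Prop) -> R}
  {theta : M -> S}.
Hypothesis HM : type_structure I S M Sig T theta.
Variables (i : I) (s t : S).
Context {U : (((M -> Prop) -> R) -> Prop) -> (list M -> Prop) -> Prop}.
Hypothesis HU : forall A, ultra (U A).

Inductive Ext : Type :=
  | Orig (m : M)
  | Diag (A : ((M -> Prop) -> R) -> Prop) (l : list M)
  | Slot (l : list M) (o : option M).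

Definition ext_field (E : Ext -> Prop) : Prop := Sig (fun m => E (Orig m)).

Definition i_belief (l : list M) : (Ext -> Prop) -> R :=
  push (Slot l) (list_unif (None :: map Some l)).

(* The slot [None], in state [t], keeps the list of slots nonempty without adding a
   j-type in state [s]. *)
Definition belief (k : I) (n : Ext) : (Ext -> Prop) -> R :=
  match n with
  | Orig m => push Orig (T k m)
  | Diag A l =>
      if excluded_middle_informative (k = i) then i_belief l
      else push (Diag A) (ultra_measure (U A))
  | Slot l (Some b) =>
      if excluded_middle_informative (k = i) then i_belief l else push Orig (T k b)
  | Slot l None =>
      if excluded_middle_informative (k = i) then i_belief l
      else ultra_measure (fun E => E (Slot l None))
  end.

Definition ext_type (k : I) (n : Ext) : (Ext -> Prop) -> R := restrict ext_field (belief k n).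

Definition ext_state (n : Ext) : S :=
  match n with
  | Orig m => theta m
  | Slot _ None => t
  | _ => s
  end.

Lemma ext_field_inf_field : inf_field ext_field.
Proof.
  destruct (ts_field HM) as [Htot [Hc [Hu Hcap]]].
  split; [exact Htot | split; [intros A; apply Hc | split; [intros A B; apply Hu |]]].
  intros F HF. unfold ext_field.
  replace (fun m => forall A, F A -> A (Orig m)) with
    (fun m => forall C, (exists A, F A /\ C = (fun x => A (Orig x))) -> C m).
  - apply Hcap. intros C [A [HA ->]]. apply HF, HA.
  - apply pred_ext. intro m. split.
    + intros H A HA. exact (H _ (ex_intro _ A (conj HA eq_refl))).
    + intros H C [A [HA ->]]. apply H, HA.
Qed.

Lemma belief_fa_prob_on k n : fa_prob_on ext_field (belief k n).
Proof.
  assert (Hpow : forall mu, fa_prob_on pow_set mu -> fa_prob_on ext_field mu).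
  { intro mu. apply fa_prob_on_sub. intros; exact Logic.I. }
  assert (Horig : forall m, fa_prob_on ext_field (push Orig (T k m))).
  { intro m. exact (fa_prob_on_push _ Orig _ (fa_prob_on_of_fa_prob _ _ (ts_prob HM k m))). }
  assert (Hi : forall l, fa_prob_on ext_field (i_belief l)).
  { intro l. apply Hpow.
    exact (fa_prob_on_push _ (Slot l) _
             (list_unif_fa_prob (None :: map Some l) ltac:(discriminate))). }
  destruct n as [m|A l|l [b|]]; simpl;
    try destruct (excluded_middle_informative (k = i)); auto.
  - apply Hpow. exact (fa_prob_on_push _ (Diag A) _ (ultra_measure_fa_prob _ (HU A))).
  - apply Hpow, (ultra_measure_fa_prob _ (ultra_principal _)).
Qed.

Lemma ext_type_fa_prob k n : fa_prob ext_field (ext_type k n).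
Proof. apply fa_prob_restrict; [exact ext_field_inf_field | apply belief_fa_prob_on]. Qed.

Lemma ext_type_in k n E : ext_field E -> ext_type k n E = belief k n E.
Proof. apply restrict_in. Qed.

Lemma ext_type_Orig k m E : ext_field E -> ext_type k (Orig m) E = T k m (fun x => E (Orig x)).
Proof. exact (ext_type_in k (Orig m) E). Qed.

Lemma ext_type_introspection k n A :
  ext_field A -> (forall n', ext_type k n' = ext_type k n -> A n') -> ext_type k n A = 1.
Proof.
  intros HA Hclass. rewrite ext_type_in by exact HA.
  assert (Hcopy : forall m, ext_type k n = ext_type k (Orig m) -> T k m (fun x => A (Orig x)) = 1).
  { intros m e. apply (ts_introspection HM); [exact HA|].
    intros m' e'. apply Hclass. rewrite e. unfold ext_type. simpl. rewrite e'. reflexivity. }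
  assert (Hi : forall l, k = i ->
    (forall o, ext_type k (Slot l o) = ext_type k n) -> i_belief l A = 1).
  { intros l -> Hslot. apply list_unif_all; [discriminate|]. intros o _. apply Hclass, Hslot. }
  destruct n as [m|B l|l [b|]]; simpl; [apply Hcopy; reflexivity|..];
    destruct (excluded_middle_informative (k = i)) as [->|ni];
    try (apply Hi; [reflexivity|]; intros [b'|]; unfold ext_type; simpl;
         destruct (excluded_middle_informative (i = i)); congruence).
  - apply ultra_measure_one. apply (ultra_mono (HU B) _ _ (ultra_full (HU B))).
    intros l' _. apply Hclass. unfold ext_type. simpl.
    destruct (excluded_middle_informative (k = i)); [contradiction | reflexivity].
  - apply Hcopy. unfold ext_type. simpl.
    destruct (excluded_middle_informative (k = i)); [contradiction | reflexivity].
  - apply ultra_measure_one, Hclass. reflexivity.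
Qed.

Definition ext_type_Delta (k : I) (n : Ext) : Delta_inf Ext ext_field :=
  exist _ (ext_type k n) (ext_type_fa_prob k n).

Lemma Ext_inf_type_space : inf_type_space I S Ext ext_field ext_type_Delta ext_state.
Proof.
  split; [constructor; exact (Slot nil None)|]. split; [exact ext_field_inf_field|].
  split; [|split].
  - intros k B _. apply (ts_saturated HM k). intros m m' e HB.
    replace (ext_type_Delta k (Orig m')) with (ext_type_Delta k (Orig m)); [exact HB|].
    apply subset_eq_compat. unfold ext_type. simpl. rewrite e. reflexivity.
  - intros k n A HA H. apply ext_type_introspection; [exact HA|].
    intros n' e. apply H. apply subset_eq_compat, e.
  - intros B _. apply (ts_theta HM).
Qed.

Section Morphism.
Variable j : I.
Hypotheses (hij : i <> j) (hst : s <> t).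
Hypothesis HU_sep : forall A b, U A (fun l => In (T j b) (map (T j) l)) <-> A (T j b).
Variable u : Ext -> M.
Hypotheses
  (Hu_orig : forall m, u (Orig m) = m)
  (Hu_theta : forall n, theta (u n) = ext_state n)
  (Hu_T : forall k n E, Sig E -> T k (u n) E = ext_type k n (fun x => E (u x)))
  (Hu_meas : forall E, Sig E -> ext_field (fun x => E (u x))).

Lemma u_pullback k n E : Sig E -> T k (u n) E = belief k n (fun x => E (u x)).
Proof. intro HE. rewrite Hu_T by exact HE. apply ext_type_in, Hu_meas, HE. Qed.

Lemma T_j_u_Slot l b : T j (u (Slot l (Some b))) = T j b.
Proof.
  apply (fa_prob_ext Sig); [apply HM | apply HM |]. intros E HE.
  rewrite u_pullback by exact HE. simpl.
  destruct (excluded_middle_informative (j = i)); [congruence|].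
  unfold push. f_equal. apply functional_extensionality. intro x. rewrite Hu_orig. reflexivity.
Qed.

Definition jtype_at_s (q : (M -> Prop) -> R) : M -> Prop := fun p => T j p = q /\ theta p = s.

Definition i_supports (q : (M -> Prop) -> R) : M -> Prop := fun p => 0 < T i p (jtype_at_s q).

Lemma jtype_at_s_meas q : Sig (jtype_at_s q).
Proof.
  apply (inf_field_and _ _ (ts_field HM)).
  - apply (ts_saturated HM j). intros m m' e. rewrite e. auto.
  - apply (ts_theta HM (fun x => x = s)).
Qed.

Lemma i_supports_meas q : Sig (i_supports q).
Proof. apply (ts_saturated HM i). intros m m' e. unfold i_supports. rewrite e. auto. Qed.

Lemma i_supports_u_Diag A l q : i_supports q (u (Diag A l)) <-> In q (map (T j) l).
Proof.
  unfold i_supports at 1. rewrite u_pullback by apply jtype_at_s_meas. simpl.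
  destruct (excluded_middle_informative (i = i)) as [_|]; [|congruence].
  unfold i_belief, push. rewrite list_unif_pos by discriminate. rewrite in_map_iff. split.
  - intros [[b|] [Hb [Hq Hs]]].
    + exists b. split; [rewrite <- (T_j_u_Slot l b); exact Hq|].
      destruct Hb as [e|Hb]; [discriminate|].
      apply in_map_iff in Hb. destruct Hb as [b' [e Hb']]. injection e as ->. exact Hb'.
    + rewrite Hu_theta in Hs. simpl in Hs. congruence.
  - intros [b [Hq Hb]]. exists (Some b). split; [right; apply in_map, Hb|].
    split; [rewrite T_j_u_Slot; exact Hq | rewrite Hu_theta; reflexivity].
Qed.

Lemma T_j_u_Diag A b : T j (u (Diag A nil)) (i_supports (T j b)) = 1 <-> A (T j b).
Proof.
  rewrite u_pullback by apply i_supports_meas. simpl.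
  destruct (excluded_middle_informative (j = i)); [congruence|].
  unfold push. rewrite ultra_measure_one, <- HU_sep.
  replace (fun l => i_supports (T j b) (u (Diag A l)))
    with (fun l => In (T j b) (map (T j) l)); [reflexivity|].
  apply pred_ext. intro l. symmetry. apply i_supports_u_Diag.
Qed.

Lemma morphism_from_Ext_absurd : False.
Proof.
  apply (cantor_on_image (T j) (fun A => u (Diag A nil))).
  intros A B e x Ax. apply (T_j_u_Diag B x). rewrite <- e. apply T_j_u_Diag, Ax.
Qed.

End Morphism.
End Construction.

Lemma unique_is_id {X : Type} (P : (X -> X) -> Prop) g :
  (exists! f, P f) -> P (fun x => x) -> P g -> forall x, g x = x.
Proof. intros [f [_ Hf]] Pid Pg x. rewrite <- (Hf g Pg), (Hf _ Pid). reflexivity. Qed.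

Lemma not_inf_universal {I S M : Type} (Sig : (M -> Prop) -> Prop)
    (T : I -> M -> Delta_inf M Sig) (theta : M -> S) (i j : I) (s t : S) :
  i <> j -> s <> t -> ~ inf_universal I S M Sig T theta.
Proof.
  intros hij hst [Hsp Huniv].
  pose proof (inf_type_space_structure _ _ _ _ _ _ Hsp) as HM.
  destruct (functional_choice _ (ultra_list_separating (fun m => proj1_sig (T j m))))
    as [U HU].
  destruct (Huniv _ _ _ _ (Ext_inf_type_space HM i s t (fun A => proj1 (HU A))))
    as [u [[Hu_meas [Hu_theta Hu_T]] _]].
  apply (morphism_from_Ext_absurd HM i s t j hij hst (fun A => proj2 (HU A)) u).
  - apply (unique_is_id _ (fun m => u (Orig m)) (Huniv M Sig T theta Hsp)).
    + hnf. split; [intros B HB; exact HB | split; intros; reflexivity].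
    + hnf. split; [|split].
      * intros B HB. exact (Hu_meas B HB).
      * intro m. exact (Hu_theta (Orig m)).
      * intros k m E HE. rewrite Hu_T by exact HE.
        exact (ext_type_Orig (T := fun k m => proj1_sig (T k m)) i k m _ (Hu_meas E HE)).
  - intro n. symmetry. apply Hu_theta.
  - exact Hu_T.
  - exact Hu_meas.
Qed.

Lemma not_star_universal {I S M : Type} (T : I -> M -> (M -> Prop) -> R) (theta : M -> S)
    (i j : I) (s t : S) :
  i <> j -> s <> t -> ~ star_universal I S M T theta.
Proof.
  intros hij hst [Hsp Huniv].
  pose proof (star_type_space_structure _ _ _ _ _ Hsp) as HM.
  destruct (functional_choice _ (ultra_list_separating (T j))) as [U HU].
  assert (HN : star_type_space I S Ext (ext_type (Sig := pow_set) (T := T) (U := U) i)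
                 (ext_state (theta := theta) s t)).
  { split; [constructor; exact (Slot nil None)|]. split.
    - exact (ext_type_fa_prob HM i (fun A => proj1 (HU A))).
    - intros k n. apply (ext_type_introspection HM i (fun A => proj1 (HU A)));
        [exact Logic.I | trivial]. }
  destruct (Huniv _ _ _ HN) as [u [[Hu_theta Hu_T] _]].
  apply (morphism_from_Ext_absurd HM i s t j hij hst (fun A => proj2 (HU A)) u).
  - apply (unique_is_id _ (fun m => u (Orig m)) (Huniv M T theta Hsp)).
    + hnf. split; intros; reflexivity.
    + hnf. split.
      * intro m. exact (Hu_theta (Orig m)).
      * intros k m E. rewrite Hu_T. exact (ext_type_Orig (T := T) i k m _ Logic.I).
  - intro n. symmetry. apply Hu_theta.
  - intros k n E _. apply Hu_T.
  - intros E _. exact Logic.I.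
Qed.

Theorem corollary1 (I S : Type)
  (hI : exists i j : I, i <> j) (hS : exists s t : S, s <> t) :
  (forall (M : Type) (Sig : (M -> Prop) -> Prop)
          (T : I -> M -> Delta_inf M Sig) (theta : M -> S),
      ~ inf_universal I S M Sig T theta) /\
  (forall (M : Type) (T : I -> M -> (M -> Prop) -> R) (theta : M -> S),
      ~ star_universal I S M T theta).
Proof.
  destruct hI as [i [j hij]], hS as [s [t hst]]. split.
  - intros M Sig T theta. exact (not_inf_universal Sig T theta i j s t hij hst).
  - intros M T theta. exact (not_star_universal T theta i j s t hij hst).
Qed.
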